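(* Fix $l,r>0$, $0<\alpha<\beta<1$ and diffusion constants $D_1\neq D_2$, and let $\delta=\frac{D_2-D_1}{D_2+D_1}$. For every $Q_0\in\mathbb{R}$ there is a unique $A(Q_0)\in(0,A_M)$ with $G_2(Q_0,A(Q_0),\delta)=0$. Furthermore $\lim_{Q_0\to\pm\infty}A(Q_0)=l$. Let $Q_0^*=Q_0^-$ if $\delta>0$ and $Q_0^*=Q_0^+$ if $\delta<0$, where $Q_0^-<0$ (for $\delta>0$) is the number such that $\partial_{Q_0}A$ has the same sign as $l-r$ for $Q_0>Q_0^-$ and the opposite sign for $Q_0<Q_0^-$, and $Q_0^+>0$ (for $\delta<0$) is the number such that $\partial_{Q_0}A$ has the sign opposite to $l-r$ for $Q_0<Q_0^+$ and the same sign for $Q_0>Q_0^+$. Then for all $Q_0\in\mathbb{R}$: (a) if $l<r$ then $l\le A(Q_0)\le A(Q_0^* )$; (b) if $l>r$ then $A(Q_0^* )\le A(Q_0)\le l$; (c) if $l=r$ then $A(Q_0)=l=r=A(Q_0^* )$.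
   Context: Setting: reduction of the steady zero-current Poisson–Nernst–Planck problem for two ion species with valences $\pm1$; $l,r>0$ are boundary concentrations, the permanent charge is $2Q_0$ on $(a,b)$ and $0$ elsewhere in $(0,1)$, $\alpha=H(a)/H(1)$, $\beta=H(b)/H(1)$ with $H(x)=\int_0^x ds/h(s)$, $h>0$ the cross-sectional area. For $Q_0\in\mathbb{R}$, $A>0$ define $B=\frac{1-\beta}{\alpha}(l-A)+r$, $A_M=l+\frac{\alpha}{1-\beta}r$, $S_a=\sqrt{Q_0^2+A^2}$, $S_b=\sqrt{Q_0^2+B^2}$, $N=A-l+S_a-S_b$, and $G_2(Q_0,A,\delta)=\delta Q_0\ln\frac{S_a+\delta Q_0}{S_b+\delta Q_0}-N$. *)

From Stdlib Require Import Reals.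
From Coquelicot Require Import Coquelicot.
Open Scope R_scope.

Definition Bval (l r alpha beta A : R) : R := (1 - beta) / alpha * (l - A) + r.
Definition A_M (l r alpha beta : R) : R := l + alpha / (1 - beta) * r.
Definition S_a (Q0 A : R) : R := sqrt (Q0 ^ 2 + A ^ 2).
Definition S_b (l r alpha beta Q0 A : R) : R :=
  sqrt (Q0 ^ 2 + (Bval l r alpha beta A) ^ 2).
Definition Nval (l r alpha beta Q0 A : R) : R :=
  A - l + S_a Q0 A - S_b l r alpha beta Q0 A.
Definition G2 (l r alpha beta Q0 A delta : R) : R :=
  delta * Q0 * ln ((S_a Q0 A + delta * Q0) / (S_b l r alpha beta Q0 A + delta * Q0))
  - Nval l r alpha beta Q0 A.

Definition sgn (x : R) : R :=
  if Rlt_dec 0 x then 1 else if Rlt_dec x 0 then -1 else 0.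

(* Defining property of Q0^* (= Q0^- if delta>0, Q0^+ if delta<0):
   dA/dQ0 exists and has the sign of (l - r) to the right of Q0^*,
   and the opposite sign to the left of Q0^*. *)
Definition Qstar_prop (l r delta : R) (Af : R -> R) (Qs : R) : Prop :=
  (delta > 0 -> Qs < 0) /\ (delta < 0 -> Qs > 0) /\
  (forall Q, Qs < Q -> exists d, is_derive Af Q d /\ sgn d = sgn (l - r)) /\
  (forall Q, Q < Qs -> exists d, is_derive Af Q d /\ sgn d = - sgn (l - r)).

From Stdlib Require Import Reals Lra Classical.
From Coquelicot Require Import Coquelicot.
Open Scope R_scope.

(* For fixed [Q0], [A |-> G2 Q0 A] has slope at most -1 on (0, A_M) and changes sign
   there. This gives the unique root [A(Q0)], the bound |A(Q0) - l| <= |G2 Q0 l| = O(1/|Q0|),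
   and, as in the implicit function theorem, A' = - (dG2/dQ0) / (dG2/dA); so A' has the sign
   of dG2/dQ0 = psi(A) - psi(B). Since psi is homogeneous of degree 0 up to a logarithm,
   at a zero Q* of dG2/dQ0 along the curve one gets delta Q* < 0 and
   (l - r) d2G2/dQ0^2 > 0. Hence (l - r) dG2/dQ0 (Q0, A(Q0)) only crosses zero upwards and
   changes sign exactly once; it does vanish, for otherwise A would be strictly monotone
   with the same limit l at both ends. So A is monotone on each side of Q*, where it
   attains its extremum. *)

(** * Logarithms and signs *)

Lemma ln_lt_sub1 x : 0 < x -> x <> 1 -> ln x < x - 1.
Proof.
  intros Hx Hx1.
  assert (Hln : ln x <> 0) by (apply ln_neq_0; auto).
  pose proof (exp_ineq1 (ln x) Hln) as H. rewrite exp_ln in H; lra.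
Qed.

Lemma ln_div_opp x y : 0 < x -> 0 < y -> ln (x / y) = - ln (y / x).
Proof.
  intros Hx Hy. rewrite <- ln_Rinv by (apply Rdiv_lt_0_compat; lra).
  f_equal. field. lra.
Qed.

Lemma sub_lt_mul_ln_div x y c : 0 < x -> c < x -> x < y -> x - y < c * ln (x / y).
Proof.
  intros Hx Hcx Hxy. rewrite ln_div_opp by lra.
  assert (Hyx : 1 < y / x) by (apply Rlt_div_r; lra).
  pose proof (ln_lt_sub1 (y / x) ltac:(lra) ltac:(lra)) as Hln.
  assert (Hln0 : 0 < ln (y / x)) by (rewrite <- ln_1; apply ln_increasing; lra).
  assert (Hx1 : x * (y / x - 1) = y - x) by (field; lra).
  destruct (Rle_or_lt 0 c); nra.
Qed.

Lemma mul_ln_div_lt_sub x y c : 0 < y -> c < y -> y < x -> c * ln (x / y) < x - y.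
Proof.
  intros Hy Hcy Hyx. pose proof (sub_lt_mul_ln_div y x c Hy Hcy Hyx).
  rewrite ln_div_opp by lra. lra.
Qed.

Lemma abs_ln_div_le x y m : 0 < m -> m <= x -> m <= y -> Rabs (ln (x / y)) <= Rabs (x - y) / m.
Proof.
  intros Hm Hx Hy.
  assert (ln_le : forall u v, m <= u -> m <= v -> ln (u / v) <= Rabs (u - v) / m).
  { intros u v Hu Hv.
    assert (Hlnle : ln (u / v) <= u / v - 1).
    { pose proof (exp_ineq1_le (ln (u / v))) as H.
      rewrite exp_ln in H by (apply Rdiv_lt_0_compat; lra). lra. }
    replace (u / v - 1) with ((u - v) / v) in Hlnle by (field; lra).
    apply (Rle_trans _ _ _ Hlnle).
    assert (0 <= Rabs (u - v) / m) by (apply Rdiv_le_0_compat; [apply Rabs_pos | lra]).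
    destruct (Rle_or_lt (u - v) 0) as [Hneg | Hpos].
    - assert (0 < / v) by (apply Rinv_0_lt_compat; lra). unfold Rdiv. nra.
    - rewrite Rabs_pos_eq by lra. unfold Rdiv. apply Rmult_le_compat_l; [lra |].
      apply Rinv_le_contravar; lra. }
  apply Rabs_le. split.
  - rewrite ln_div_opp by lra. rewrite Rabs_minus_sym.
    pose proof (ln_le y x Hy Hx). lra.
  - apply ln_le; lra.
Qed.

Lemma sgn_cases x :
  (0 < x /\ sgn x = 1) \/ (x < 0 /\ sgn x = -1) \/ (x = 0 /\ sgn x = 0).
Proof.
  unfold sgn. destruct (Rlt_dec 0 x); [left; split; auto |].
  destruct (Rlt_dec x 0); [right; left; split; auto |]. right; right. split; [lra | auto].
Qed.

Lemma sgn_eq_of_mul_pos x y : 0 < x * y -> sgn x = sgn y.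
Proof.
  intros H. destruct (sgn_cases x) as [[? ->] | [[? ->] | [? ->]]];
    destruct (sgn_cases y) as [[? ->] | [[? ->] | [? ->]]]; subst; nra.
Qed.

Lemma sgn_eq_opp_of_mul_neg x y : x * y < 0 -> sgn x = - sgn y.
Proof.
  intros H. destruct (sgn_cases x) as [[? ->] | [[? ->] | [? ->]]];
    destruct (sgn_cases y) as [[? ->] | [[? ->] | [? ->]]]; subst; nra.
Qed.

Lemma mul_pos_of_sgn_eq x y : y <> 0 -> sgn x = sgn y -> 0 < x * y.
Proof.
  intros Hy H. destruct (sgn_cases x) as [[? Ex] | [[? Ex] | [? Ex]]];
    destruct (sgn_cases y) as [[? Ey] | [[? Ey] | [? Ey]]]; rewrite Ex, Ey in H; nra.
Qed.

Lemma mul_neg_of_sgn_eq_opp x y : y <> 0 -> sgn x = - sgn y -> x * y < 0.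
Proof.
  intros Hy H. destruct (sgn_cases x) as [[? Ex] | [[? Ex] | [? Ex]]];
    destruct (sgn_cases y) as [[? Ey] | [[? Ey] | [? Ey]]]; rewrite Ex, Ey in H; nra.
Qed.

Lemma sgn_0 : sgn 0 = 0.
Proof. destruct (sgn_cases 0) as [[? _] | [[? _] | [_ ->]]]; lra. Qed.

(** * Monotonicity, limits and sign changes *)

Lemma continuity_pt_eps (f : R -> R) x :
  continuity_pt f x <-> forall eps, 0 < eps -> exists del, 0 < del /\
    forall y, Rabs (y - x) < del -> Rabs (f y - f x) < eps.
Proof.
  unfold continuity_pt, continue_in, limit1_in, limit_in; simpl; unfold R_dist.
  split; intros H eps Heps; destruct (H eps Heps) as [del [Hdel Hy]];
    exists del; split; auto.
  - intros y Hyx. destruct (Req_dec y x) as [-> | Hne].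
    + rewrite Rminus_diag, Rabs_R0. auto.
    + apply Hy. split; [split; [exact I | auto] | auto].
  - intros y [_ Hyx]. auto.
Qed.

Lemma lt_of_derive_pos (f df : R -> R) a b : a < b ->
  (forall x, a <= x <= b -> is_derive f x (df x)) -> (forall x, a < x < b -> 0 < df x) ->
  f a < f b.
Proof.
  intros Hab Hd Hpos.
  destruct (MVT_cor2 f df a b Hab) as [c [E Hc]].
  - intros c Hc. apply is_derive_Reals. auto.
  - pose proof (Hpos c Hc). nra.
Qed.

Lemma sub_le_of_derive_le_m1 (f df : R -> R) a b : a <= b ->
  (forall x, a <= x <= b -> is_derive f x (df x)) -> (forall x, a <= x <= b -> df x <= -1) ->
  b - a <= f a - f b.
Proof.
  intros Hab Hd Hle. destruct (Req_dec a b) as [<- | Hne]; [lra |].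
  destruct (MVT_cor2 f df a b ltac:(lra)) as [c [E Hc]].
  - intros c Hc. apply is_derive_Reals. auto.
  - pose proof (Hle c ltac:(lra)). nra.
Qed.

Lemma dist_root_le (f df : R -> R) lo hi z a :
  (forall x, lo < x < hi -> is_derive f x (df x)) -> (forall x, lo < x < hi -> df x <= -1) ->
  lo < z < hi -> lo < a < hi -> f z = 0 -> Rabs (z - a) <= Rabs (f a).
Proof.
  intros Hd Hle Hz Ha Ez.
  assert (Hsteep : forall u v, lo < u -> u <= v -> v < hi -> v - u <= f u - f v).
  { intros u v Hu Huv Hv. apply (sub_le_of_derive_le_m1 f df); auto;
      intros x Hx; [apply Hd | apply Hle]; lra. }
  destruct (Rle_or_lt a z).
  - pose proof (Hsteep a z ltac:(lra) ltac:(lra) ltac:(lra)).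
    rewrite !Rabs_pos_eq by lra. lra.
  - pose proof (Hsteep z a ltac:(lra) ltac:(lra) ltac:(lra)).
    rewrite Rabs_left, Rabs_left1 by lra. lra.
Qed.

Lemma is_lim_infty_of_inv_bound (f : R -> R) (L C : R) :
  (forall q, q <> 0 -> Rabs (f q - L) <= C / Rabs q) ->
  is_lim f p_infty L /\ is_lim f m_infty L.
Proof.
  intros Hb.
  assert (HC : forall eps : posreal, 0 <= Rabs C / eps)
    by (intro eps; apply Rdiv_le_0_compat; [apply Rabs_pos | apply cond_pos]).
  assert (Hfar : forall eps : posreal, forall x, Rabs C / eps < Rabs x -> Rabs (f x - L) < eps).
  { intros eps x Hx. pose proof (cond_pos eps) as He. pose proof (HC eps).
    assert (Hx0 : x <> 0) by (intros ->; rewrite Rabs_R0 in Hx; lra).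
    apply (Rle_lt_trans _ _ _ (Hb x Hx0)).
    apply (Rmult_lt_reg_r (Rabs x)); [lra |].
    replace (C / Rabs x * Rabs x) with C by (field; lra).
    apply (Rmult_lt_compat_l eps) in Hx; [| lra].
    replace (eps * (Rabs C / eps)) with (Rabs C) in Hx by (field; lra).
    pose proof (Rle_abs C). lra. }
  split; apply is_lim_spec; intro eps; simpl; pose proof (HC eps).
  - exists (Rabs C / eps). intros x Hx. apply Hfar. rewrite (Rabs_pos_eq x); lra.
  - exists (- (Rabs C / eps)). intros x Hx. apply Hfar. rewrite (Rabs_left x); lra.
Qed.

Lemma strict_incr_same_lims_absurd (g : R -> R) (L : Rbar) :
  (forall a b, a < b -> g a < g b) -> is_lim g p_infty L -> is_lim g m_infty L -> False.
Proof.
  intros Hincr Hp Hm.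
  assert (Hge : Rbar_le (g 1) L).
  { apply (is_lim_le_loc (fun _ => g 1) g p_infty); [| apply is_lim_const | exact Hp].
    exists 1. intros x Hx. left. apply Hincr. lra. }
  assert (Hle : Rbar_le L (g (-1))).
  { apply (is_lim_le_loc g (fun _ => g (-1)) m_infty); [| exact Hm | apply is_lim_const].
    exists (-1). intros x Hx. left. apply Hincr. lra. }
  pose proof (Hincr (-1) 1 ltac:(lra)).
  destruct L as [L | |]; simpl in *; lra.
Qed.

Definition upcrossing (f : R -> R) (z : R) : Prop :=
  exists e, 0 < e /\ (forall t, z < t < z + e -> 0 < f t) /\ (forall t, z - e < t < z -> f t < 0).

Lemma upcrossing_of_derive (f : R -> R) z D : f z = 0 -> 0 < D -> is_derive f z D -> upcrossing f z.
Proof.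
  intros Hz HD Hd. apply is_derive_Reals in Hd. destruct (Hd D HD) as [del Hdel].
  assert (Hquot : forall t, t <> z -> Rabs (t - z) < del -> 0 < f t / (t - z)).
  { intros t Ht Htd. specialize (Hdel (t - z) ltac:(lra) Htd).
    replace (z + (t - z)) with t in Hdel by ring. rewrite Hz, Rminus_0_r in Hdel.
    apply Rabs_def2 in Hdel. lra. }
  exists del. split; [apply cond_pos | split]; intros t Ht.
  - pose proof (Hquot t ltac:(lra) ltac:(rewrite Rabs_pos_eq; lra)).
    replace (f t) with (f t / (t - z) * (t - z)) by (field; lra). nra.
  - pose proof (Hquot t ltac:(lra) ltac:(rewrite Rabs_left; lra)).
    replace (f t) with (f t / (t - z) * (t - z)) by (field; lra). nra.
Qed.

Lemma nonvanishing_sign (f : R -> R) : (forall x, continuity_pt f x) -> (forall x, f x <> 0) ->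
  (forall x, 0 < f x) \/ (forall x, f x < 0).
Proof.
  intros Hc Hnz.
  assert (Hsame : forall x, f 0 * f x > 0).
  { intros x. destruct (Rtotal_order (f 0 * f x) 0) as [Hneg | [Hz | Hpos]]; [| | exact Hpos].
    - destruct (IVT_cor f (Rmin 0 x) (Rmax 0 x) Hc (Rmin_Rmax 0 x)) as [c [_ Hc0]].
      + unfold Rmin, Rmax. destruct (Rle_dec 0 x); lra.
      + destruct (Hnz c Hc0).
    - apply Rmult_integral in Hz.
      destruct Hz as [Hz | Hz]; [destruct (Hnz 0 Hz) | destruct (Hnz x Hz)]. }
  destruct (Rlt_or_le 0 (f 0)) as [H0 | H0].
  - left. intros x. pose proof (Hsame x). nra.
  - right. intros x. pose proof (Hsame x). pose proof (Hnz 0). assert (f 0 < 0) by lra. nra.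
Qed.

Lemma monotone_same_lims_absurd (g dg : R -> R) (L : R) :
  (forall t, is_derive g t (dg t)) -> ((forall t, 0 < dg t) \/ (forall t, dg t < 0)) ->
  is_lim g p_infty L -> is_lim g m_infty L -> False.
Proof.
  intros Hd [Hpos | Hneg] Hp Hm.
  - apply (strict_incr_same_lims_absurd g L); auto.
    intros a b Hab. apply (lt_of_derive_pos g dg); auto.
  - apply (strict_incr_same_lims_absurd (fun t => - g t) (- L)).
    + intros a b Hab. apply (lt_of_derive_pos (fun t => - g t) (fun t => - dg t)); auto.
      * intros x _. apply (is_derive_opp g). auto.
      * intros x _. pose proof (Hneg x). lra.
    + apply (is_lim_opp g p_infty L). exact Hp.
    + apply (is_lim_opp g m_infty L). exact Hm.
Qed.

Lemma first_zero_after (f : R -> R) p w : (forall x, continuity_pt f x) ->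
  0 < f p -> f w <= 0 -> p < w ->
  exists m, p < m <= w /\ f m = 0 /\ (forall s, p <= s < m -> 0 < f s).
Proof.
  intros Hc Hp Hw Hpw.
  set (E := fun t => p <= t /\ forall s, p <= s <= t -> 0 < f s).
  assert (Ep : E p) by (split; [lra | intros s Hs; replace s with p by lra; exact Hp]).
  assert (Ebound : forall t, E t -> t <= w).
  { intros t [Hpt Ht]. destruct (Rle_or_lt t w); auto. pose proof (Ht w ltac:(lra)). lra. }
  destruct (completeness E (ex_intro _ w Ebound) (ex_intro _ p Ep)) as [m [Hub Hlub]].
  assert (Hpm : p <= m) by exact (Hub p Ep).
  assert (Hmw : m <= w) by (apply Hlub; exact Ebound).
  assert (Hbelow : forall s, p <= s < m -> 0 < f s).
  { intros s Hs. destruct (Rlt_or_le 0 (f s)) as [ok | Hfs]; auto.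
    assert (m <= s); [| lra].
    apply Hlub. intros t [Hpt Ht]. destruct (Rle_or_lt t s); auto.
    pose proof (Ht s ltac:(lra)). lra. }
  assert (Hfm : f m = 0).
  { destruct (Rtotal_order (f m) 0) as [Hneg | [Hzero | Hpos]]; [exfalso | exact Hzero | exfalso].
    - destruct (proj1 (continuity_pt_eps f m) (Hc m) (- f m) ltac:(lra)) as [del [Hdel Hnear]].
      assert (p < m) by (destruct (Req_dec p m) as [<- |]; lra).
      set (t := Rmax p (m - del / 2)).
      assert (p <= t) by apply Rmax_l. assert (m - del / 2 <= t) by apply Rmax_r.
      assert (t < m) by (apply Rmax_lub_lt; lra).
      pose proof (Hnear t ltac:(rewrite Rabs_left; lra)). pose proof (Rle_abs (f t - f m)).
      pose proof (Hbelow t ltac:(lra)). lra.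
    - destruct (proj1 (continuity_pt_eps f m) (Hc m) (f m) Hpos) as [del [Hdel Hnear]].
      assert (m < w) by (destruct (Req_dec m w) as [<- |]; lra).
      set (t := Rmin (m + del / 2) w).
      assert (t <= m + del / 2) by apply Rmin_l. assert (t <= w) by apply Rmin_r.
      assert (m < t) by (apply Rmin_glb_lt; lra).
      assert (E t); [| pose proof (Hub t ltac:(assumption)); lra].
      split; [lra |]. intros s Hs. destruct (Rlt_or_le s m); [apply Hbelow; lra |].
      pose proof (Hnear s ltac:(rewrite Rabs_pos_eq; lra)).
      pose proof (Rle_abs (- (f s - f m))) as Habs. rewrite Rabs_Ropp in Habs. lra. }
  exists m. split; [split; [destruct (Req_dec p m) as [<- |]; lra | exact Hmw] | auto].
Qed.

Lemma pos_right_of_upcrossings (f : R -> R) :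
  (forall x, continuity_pt f x) -> (forall z, f z = 0 -> upcrossing f z) ->
  forall z t, f z = 0 -> z < t -> 0 < f t.
Proof.
  intros Hc Hup z w Hz Hzw.
  destruct (Rlt_or_le 0 (f w)) as [ok | Hw]; auto. exfalso.
  destruct (Hup z Hz) as [e [He [Hright _]]].
  assert (Hwe : z + e <= w).
  { destruct (Rle_or_lt (z + e) w); auto. pose proof (Hright w ltac:(lra)). lra. }
  set (p := z + e / 2).
  destruct (first_zero_after f p w Hc (Hright p ltac:(unfold p; lra)) Hw ltac:(unfold p; lra))
    as [m [Hm [Hfm Hbelow]]].
  destruct (Hup m Hfm) as [e' [He' [_ Hleft]]].
  set (t := Rmax p (m - e' / 2)).
  assert (p <= t) by apply Rmax_l. assert (m - e' / 2 <= t) by apply Rmax_r.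
  assert (t < m) by (apply Rmax_lub_lt; lra).
  pose proof (Hbelow t ltac:(lra)). pose proof (Hleft t ltac:(lra)). lra.
Qed.

Lemma sign_change_of_upcrossings (f : R -> R) z :
  (forall x, continuity_pt f x) -> (forall z, f z = 0 -> upcrossing f z) -> f z = 0 ->
  (forall t, z < t -> 0 < f t) /\ (forall t, t < z -> f t < 0).
Proof.
  intros Hc Hup Hz. split; [intros t; apply (pos_right_of_upcrossings f Hc Hup z t Hz) |].
  set (g := fun x => - f (- x)).
  assert (Hgc : forall x, continuity_pt g x).
  { intro x. apply continuity_pt_opp.
    apply (continuity_pt_comp (fun x => - x) f);
      [apply continuity_pt_opp, continuity_pt_id | apply Hc]. }
  assert (Hgup : forall y, g y = 0 -> upcrossing g y).
  { intros y Hy. unfold g in Hy. destruct (Hup (- y) ltac:(lra)) as [e [He [Hr Hl]]].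
    exists e. split; [auto | split]; intros t Ht; unfold g.
    - pose proof (Hl (- t) ltac:(lra)). lra.
    - pose proof (Hr (- t) ltac:(lra)). lra. }
  intros t Ht.
  pose proof (pos_right_of_upcrossings g Hgc Hgup (- z) (- t)) as H.
  unfold g in H. rewrite !Ropp_involutive in H. specialize (H ltac:(lra) ltac:(lra)). lra.
Qed.

(** * Steep implicit functions *)

Lemma quotient_approx ga gq n s e1 e2 : ga <= -1 -> s <= -1 ->
  Rabs (n - gq) < e1 -> Rabs (s - ga) < e2 ->
  Rabs (- n / s - - gq / ga) <= Rabs ga * e1 + Rabs gq * e2.
Proof.
  intros Hga Hs Hn Hsg.
  replace (- n / s - - gq / ga) with ((ga * (gq - n) + gq * (s - ga)) / (s * ga)) by (field; lra).
  unfold Rdiv. rewrite Rabs_mult, Rabs_inv.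
  assert (Hden : 1 <= Rabs (s * ga)) by (rewrite Rabs_pos_eq; nra).
  assert (Hnum : Rabs (ga * (gq - n) + gq * (s - ga)) <= Rabs ga * e1 + Rabs gq * e2).
  { eapply Rle_trans; [apply Rabs_triang |]. rewrite !Rabs_mult, (Rabs_minus_sym gq n).
    apply Rplus_le_compat; apply Rmult_le_compat_l; try apply Rabs_pos; lra. }
  assert (0 < / Rabs (s * ga) <= 1).
  { split; [apply Rinv_0_lt_compat; lra |]. rewrite <- Rinv_1. apply Rinv_le_contravar; lra. }
  pose proof (Rabs_pos (ga * (gq - n) + gq * (s - ga))). nra.
Qed.

Lemma abs_mul_small x eps : 0 < eps -> Rabs x * (eps / (2 * (Rabs x + 1))) < eps / 2.
Proof.
  intros Heps. pose proof (Rabs_pos x).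
  apply (Rmult_lt_reg_r (2 * (Rabs x + 1))); [lra |].
  replace (Rabs x * (eps / (2 * (Rabs x + 1))) * (2 * (Rabs x + 1))) with (Rabs x * eps)
    by (field; lra).
  nra.
Qed.

Lemma abs_lt_Rmin3 h a b c : Rabs h < Rmin a (Rmin b c) -> Rabs h < a /\ Rabs h < b /\ Rabs h < c.
Proof.
  intros Hh. pose proof (Rmin_l a (Rmin b c)). pose proof (Rmin_r a (Rmin b c)).
  pose proof (Rmin_l b c). pose proof (Rmin_r b c). lra.
Qed.

Lemma continuity_pt_of_is_derive (f : R -> R) x l : is_derive f x l -> continuity_pt f x.
Proof. intros H. apply derivable_continuous_pt. exists l. apply is_derive_Reals. exact H. Qed.

Section SteepImplicitFunction.

Variables (F Fa : R -> R -> R) (lo hi : R) (A : R -> R).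
Hypothesis F_derive_a : forall q a, lo < a < hi -> is_derive (F q) a (Fa q a).
Hypothesis Fa_le_m1 : forall q a, lo < a < hi -> Fa q a <= -1.
Hypothesis A_root : forall q, lo < A q < hi /\ F q (A q) = 0.

Lemma implicit_dist q a : lo < a < hi -> Rabs (A q - a) <= Rabs (F q a).
Proof.
  intros Ha. destruct (A_root q) as [HAq EAq].
  exact (dist_root_le (F q) (Fa q) lo hi (A q) a (F_derive_a q) (Fa_le_m1 q) HAq Ha EAq).
Qed.

Lemma implicit_continuity q0 : continuity_pt (fun q => F q (A q0)) q0 -> continuity_pt A q0.
Proof.
  intros Hc. apply continuity_pt_eps. intros eps Heps.
  destruct (proj1 (continuity_pt_eps _ q0) Hc eps Heps) as [del [Hdel Hnear]].
  exists del. split; auto. intros q Hq.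
  specialize (Hnear q Hq). rewrite (proj2 (A_root q0)), Rminus_0_r in Hnear.
  pose proof (implicit_dist q (A q0) (proj1 (A_root q0))). lra.
Qed.

Lemma implicit_secant q a : lo < a < hi -> exists c, lo < c < hi /\
  Rabs (c - a) <= Rabs (A q - a) /\ F q (A q) - F q a = Fa q c * (A q - a).
Proof.
  intros Ha. destruct (A_root q) as [HAq _].
  assert (Hin : forall x, Rmin a (A q) <= x <= Rmax a (A q) -> lo < x < hi).
  { intros x Hx. pose proof (Rmin_glb_lt a (A q) lo ltac:(lra) ltac:(lra)).
    pose proof (Rmax_lub_lt a (A q) hi ltac:(lra) ltac:(lra)). lra. }
  destruct (MVT_gen (F q) a (A q) (Fa q)) as [c [Hc E]].
  - intros x Hx. apply F_derive_a, Hin. lra.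
  - intros x Hx. apply (continuity_pt_of_is_derive _ _ (Fa q x)), F_derive_a, Hin. exact Hx.
  - exists c. split; [apply Hin; exact Hc | split; [| exact E]].
    apply Rabs_le_between_min_max. rewrite Rmin_comm, Rmax_comm. exact Hc.
Qed.

Lemma implicit_derive q0 Fq : is_derive (fun q => F q (A q0)) q0 Fq ->
  continuity_2d_pt Fa q0 (A q0) -> is_derive A q0 (- Fq / Fa q0 (A q0)).
Proof.
  intros HFq HFa. destruct (A_root q0) as [Ha0 E0].
  set (a0 := A q0) in *. set (ga := Fa q0 a0).
  assert (Hga : ga <= -1) by (apply Fa_le_m1; auto).
  assert (HAc : continuity_pt A q0).
  { apply implicit_continuity. exact (continuity_pt_of_is_derive _ _ _ HFq). }
  apply is_derive_Reals. apply is_derive_Reals in HFq. intros eps Heps.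
  set (e1 := eps / (2 * (Rabs ga + 1))). set (e2 := eps / (2 * (Rabs Fq + 1))).
  assert (He1 : 0 < e1) by (apply Rdiv_lt_0_compat; [| pose proof (Rabs_pos ga)]; lra).
  assert (He2 : 0 < e2) by (apply Rdiv_lt_0_compat; [| pose proof (Rabs_pos Fq)]; lra).
  destruct (HFq e1 He1) as [del1 Hdel1].
  destruct (HFa (mkposreal e2 He2)) as [del2 Hdel2]. simpl in Hdel2.
  destruct (proj1 (continuity_pt_eps A q0) HAc del2 (cond_pos del2)) as [del3 [Hdel3 Hnear]].
  assert (Hmin : 0 < Rmin del1 (Rmin del2 del3)).
  { repeat apply Rmin_pos; auto; apply cond_pos. }
  exists (mkposreal _ Hmin). simpl. intros h Hh0 Hh. fold a0.
  destruct (abs_lt_Rmin3 _ _ _ _ Hh) as [Hh1 [Hh2 Hh3]].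
  specialize (Hdel1 h Hh0 Hh1). rewrite E0, Rminus_0_r in Hdel1.
  assert (HAh : Rabs (A (q0 + h) - a0) < del2)
    by (apply Hnear; replace (q0 + h - q0) with h by ring; exact Hh3).
  destruct (implicit_secant (q0 + h) a0 Ha0) as [c [Hcin [Hc Ec]]].
  rewrite (proj2 (A_root (q0 + h))) in Ec.
  assert (Hs : Fa (q0 + h) c <= -1) by (apply Fa_le_m1; exact Hcin).
  assert (Hsga : Rabs (Fa (q0 + h) c - ga) < e2)
    by (apply Hdel2; [replace (q0 + h - q0) with h by ring | ]; lra).
  replace ((A (q0 + h) - a0) / h) with (- (F (q0 + h) a0 / h) / Fa (q0 + h) c)
    by (replace (F (q0 + h) a0) with (- Fa (q0 + h) c * (A (q0 + h) - a0)) by lra; field; lra).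
  eapply Rle_lt_trans; [apply (quotient_approx ga Fq _ _ e1 e2); auto |].
  pose proof (abs_mul_small ga eps Heps). pose proof (abs_mul_small Fq eps Heps).
  unfold e1, e2. lra.
Qed.

End SteepImplicitFunction.

Section LipschitzComposition.

Variables (f : R -> R -> R) (g : R -> R) (z del L : R).
Hypothesis del_pos : 0 < del.
Hypothesis f_lipschitz : forall t a,
  Rabs (a - g z) < del -> Rabs (f t a - f t (g z)) <= L * Rabs (a - g z).

Lemma lipschitz_small a eps : 0 < eps -> Rabs (a - g z) < del ->
  Rabs (a - g z) < eps / (2 * (Rabs L + 1)) -> forall t, Rabs (f t a - f t (g z)) < eps / 2.
Proof.
  intros Heps Ha Hsmall t.
  apply (Rle_lt_trans _ _ _ (f_lipschitz t a Ha)).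
  apply (Rle_lt_trans _ (Rabs L * (eps / (2 * (Rabs L + 1))))); [| apply abs_mul_small; lra].
  pose proof (Rabs_pos (a - g z)). pose proof (Rle_abs L). pose proof (Rabs_pos L). nra.
Qed.

Lemma continuity_pt_comp_lipschitz :
  continuity_pt g z -> continuity_pt (fun t => f t (g z)) z -> continuity_pt (fun t => f t (g t)) z.
Proof.
  intros Hg Hf. apply continuity_pt_eps. intros eps Heps.
  destruct (proj1 (continuity_pt_eps _ z) Hf (eps / 2) ltac:(lra)) as [del1 [Hdel1 Hf1]].
  assert (He2 : 0 < Rmin del (eps / (2 * (Rabs L + 1)))).
  { apply Rmin_pos; [lra | apply Rdiv_lt_0_compat; [| pose proof (Rabs_pos L)]; lra]. }
  destruct (proj1 (continuity_pt_eps g z) Hg _ He2) as [del2 [Hdel2 Hg2]].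
  exists (Rmin del1 del2). split; [apply Rmin_pos; lra |]. intros t Ht.
  specialize (Hf1 t (Rlt_le_trans _ _ _ Ht (Rmin_l _ _))).
  specialize (Hg2 t (Rlt_le_trans _ _ _ Ht (Rmin_r _ _))).
  pose proof (lipschitz_small (g t) eps Heps (Rlt_le_trans _ _ _ Hg2 (Rmin_l _ _))
    (Rlt_le_trans _ _ _ Hg2 (Rmin_r _ _)) t).
  replace (f t (g t) - f z (g z)) with ((f t (g t) - f t (g z)) + (f t (g z) - f z (g z))) by ring.
  eapply Rle_lt_trans; [apply Rabs_triang | lra].
Qed.

Lemma is_derive_comp_lipschitz D : is_derive g z 0 ->
  is_derive (fun t => f t (g z)) z D -> is_derive (fun t => f t (g t)) z D.
Proof.
  intros Hg Hf.
  destruct (proj1 (continuity_pt_eps g z) (continuity_pt_of_is_derive g z 0 Hg) del del_pos)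
    as [del3 [Hdel3 Hg3]].
  apply is_derive_Reals in Hg. apply is_derive_Reals in Hf. apply is_derive_Reals.
  intros eps Heps.
  destruct (Hf (eps / 2) ltac:(lra)) as [del1 Hf1].
  assert (He2 : 0 < eps / (2 * (Rabs L + 1)))
    by (apply Rdiv_lt_0_compat; [| pose proof (Rabs_pos L)]; lra).
  destruct (Hg _ He2) as [del2 Hg2].
  assert (Hmin : 0 < Rmin del1 (Rmin del2 del3)) by (repeat apply Rmin_pos; auto; apply cond_pos).
  exists (mkposreal _ Hmin). simpl. intros h Hh0 Hh.
  destruct (abs_lt_Rmin3 _ _ _ _ Hh) as [Hh1 [Hh2 Hh3]].
  specialize (Hf1 h Hh0 Hh1). specialize (Hg2 h Hh0 Hh2). rewrite Rminus_0_r in Hg2.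
  rewrite Rabs_div in Hg2 by exact Hh0.
  assert (Hha : 0 < Rabs h) by (apply Rabs_pos_lt; exact Hh0).
  assert (Hlip : Rabs (f (z + h) (g (z + h)) - f (z + h) (g z)) / Rabs h < eps / 2).
  { apply (Rle_lt_trans _ (Rabs L * (eps / (2 * (Rabs L + 1))))); [| apply abs_mul_small; lra].
    apply (Rle_trans _ (L * (Rabs (g (z + h) - g z) / Rabs h))).
    - unfold Rdiv. rewrite <- Rmult_assoc. apply Rmult_le_compat_r; [left; apply Rinv_0_lt_compat; lra |].
      apply f_lipschitz, Hg3. replace (z + h - z) with h by ring. exact Hh3.
    - pose proof (Rle_abs L). pose proof (Rabs_pos L).
      assert (0 <= Rabs (g (z + h) - g z) / Rabs h) by (apply Rdiv_le_0_compat; [apply Rabs_pos | lra]).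
      nra. }
  replace ((f (z + h) (g (z + h)) - f z (g z)) / h - D) with
    ((f (z + h) (g (z + h)) - f (z + h) (g z)) / h + ((f (z + h) (g z) - f z (g z)) / h - D))
    by (field; exact Hh0).
  eapply Rle_lt_trans; [apply Rabs_triang |]. rewrite Rabs_div by exact Hh0. lra.
Qed.

End LipschitzComposition.

(** * The functions of the model *)

Lemma S_a_sq q s : S_a q s ^ 2 = q ^ 2 + s ^ 2.
Proof. unfold S_a. rewrite pow2_sqrt; nra. Qed.

Lemma S_a_nonneg q s : 0 <= S_a q s.
Proof. apply sqrt_pos. Qed.

Lemma abs_le_S_a_l q s : Rabs q <= S_a q s.
Proof.
  unfold S_a. rewrite <- sqrt_Rsqr_abs. apply sqrt_le_1_alt. unfold Rsqr. nra.
Qed.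

Lemma abs_le_S_a_r q s : Rabs s <= S_a q s.
Proof.
  unfold S_a. rewrite <- sqrt_Rsqr_abs. apply sqrt_le_1_alt. unfold Rsqr. nra.
Qed.

Lemma S_a_pos q s : 0 < s -> 0 < S_a q s.
Proof. intros Hs. pose proof (abs_le_S_a_r q s) as H. rewrite Rabs_pos_eq in H by lra. lra. Qed.

Lemma S_a_lt q s1 s2 : 0 <= s1 < s2 -> S_a q s1 < S_a q s2.
Proof. intros Hs. apply sqrt_lt_1; nra. Qed.

Lemma S_a_0_l s : 0 <= s -> S_a 0 s = s.
Proof.
  intros Hs. unfold S_a. replace (0 ^ 2 + s ^ 2) with (s ^ 2) by ring. apply sqrt_pow2, Hs.
Qed.

Definition Xd (d q s : R) : R := S_a q s + d * q.

Lemma Xd_ge d q s : (1 - Rabs d) * S_a q s <= Xd d q s.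
Proof.
  unfold Xd. pose proof (abs_le_S_a_l q s). pose proof (Rabs_pos d).
  pose proof (Rle_abs (- (d * q))) as Hdq. rewrite Rabs_Ropp, Rabs_mult in Hdq. nra.
Qed.

Lemma Xd_pos d q s : -1 < d < 1 -> 0 < s \/ q <> 0 -> 0 < Xd d q s.
Proof.
  intros Hd Hsq. eapply Rlt_le_trans; [| apply Xd_ge].
  assert (Hd1 : Rabs d < 1) by (apply Rabs_def1; lra).
  apply Rmult_lt_0_compat; [lra |]. destruct Hsq as [Hs | Hq].
  - apply S_a_pos, Hs.
  - pose proof (abs_le_S_a_l q s). pose proof (Rabs_pos_lt q Hq). lra.
Qed.

(* dG2/dQ0 = psi(A) - psi(B); [psi_s] and [psi_q] are the partial derivatives of [psi]. *)
Definition psi (d q s : R) : R := d * ln (Xd d q s) - (q + d * S_a q s) / Xd d q s.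
Definition psi_s (d q s : R) : R := s * (q + d * S_a q s) / (S_a q s * Xd d q s ^ 2).
Definition psi_q (d q s : R) : R :=
  (d * (q + d * S_a q s) * Xd d q s - (1 - d ^ 2) * s ^ 2) / (S_a q s * Xd d q s ^ 2).

Section Psi.

Variable d : R.
Hypothesis d_bounds : -1 < d < 1.

Lemma psi_derive_s q s : 0 < s -> is_derive (psi d q) s (psi_s d q s).
Proof.
  intros Hs. pose proof (Xd_pos d q s d_bounds (or_introl Hs)) as HX.
  pose proof (S_a_pos q s Hs) as HS. pose proof (S_a_sq q s) as HS2.
  unfold psi, psi_s, Xd, S_a in *. auto_derive.
  - replace (q * (q * 1) + s * (s * 1)) with (q ^ 2 + s ^ 2) by ring. repeat split; nra.
  - replace (q * (q * 1) + s * (s * 1)) with (q ^ 2 + s ^ 2) by ring.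
    set (S := sqrt (q ^ 2 + s ^ 2)) in *. field. lra.
Qed.

Lemma psi_derive_q q s : 0 < s -> is_derive (fun q => psi d q s) q (psi_q d q s).
Proof.
  intros Hs. pose proof (Xd_pos d q s d_bounds (or_introl Hs)) as HX.
  pose proof (S_a_pos q s Hs) as HS. pose proof (S_a_sq q s) as HS2.
  unfold psi, psi_q, Xd, S_a in *. auto_derive.
  - replace (q * (q * 1) + s * (s * 1)) with (q ^ 2 + s ^ 2) by ring. repeat split; nra.
  - replace (q * (q * 1) + s * (s * 1)) with (q ^ 2 + s ^ 2) by ring.
    set (S := sqrt (q ^ 2 + s ^ 2)) in *.
    field_simplify_eq; [| split; lra]. replace (s ^ 2) with (S ^ 2 - q ^ 2) by lra. ring.
Qed.

(* Euler's relation for psi (t Q0) (t s) = psi Q0 s + delta ln t. *)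
Lemma psi_euler q s : 0 < s -> q * psi_q d q s + s * psi_s d q s = d.
Proof.
  intros Hs. pose proof (Xd_pos d q s d_bounds (or_introl Hs)) as HX.
  pose proof (S_a_pos q s Hs) as HS. pose proof (S_a_sq q s) as HS2.
  unfold psi_q, psi_s. unfold Xd in *. set (S := S_a q s) in *.
  field_simplify_eq; [| split; lra]. replace (s ^ 2) with (S ^ 2 - q ^ 2) by lra. ring.
Qed.

Lemma abs_psi_s_le q s : 0 < s -> Rabs (psi_s d q s) <= 2 / ((1 - Rabs d) ^ 2 * s).
Proof.
  intros Hs. pose proof (Xd_pos d q s d_bounds (or_introl Hs)) as HX.
  pose proof (S_a_pos q s Hs) as HS. pose proof (Xd_ge d q s) as HXS.
  pose proof (abs_le_S_a_l q s) as Hq. pose proof (abs_le_S_a_r q s) as Hsa.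
  rewrite Rabs_pos_eq in Hsa by lra.
  assert (Hd1 : Rabs d < 1) by (apply Rabs_def1; lra). pose proof (Rabs_pos d).
  set (S := S_a q s) in *. set (X := Xd d q s) in *. set (e := 1 - Rabs d) in *.
  assert (Hnum : Rabs (q + d * S) <= 2 * S).
  { eapply Rle_trans; [apply Rabs_triang |]. rewrite Rabs_mult, (Rabs_pos_eq S) by lra. nra. }
  assert (He : 0 < e) by (unfold e; lra).
  assert (HSX : 0 < S * X ^ 2) by (apply Rmult_lt_0_compat; [lra | apply pow_lt; lra]).
  assert (Hes : 0 < e ^ 2 * s) by (apply Rmult_lt_0_compat; [apply pow_lt |]; lra).
  unfold psi_s. fold S X.
  rewrite Rabs_div, Rabs_mult, (Rabs_pos_eq s), (Rabs_pos_eq (S * X ^ 2)) by lra.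
  apply (Rmult_le_reg_r (S * X ^ 2 * (e ^ 2 * s))); [apply Rmult_lt_0_compat; lra |].
  replace (s * Rabs (q + d * S) / (S * X ^ 2) * (S * X ^ 2 * (e ^ 2 * s)))
    with (s * Rabs (q + d * S) * (e ^ 2 * s)) by (field; lra).
  replace (2 / (e ^ 2 * s) * (S * X ^ 2 * (e ^ 2 * s))) with (2 * (S * X ^ 2)) by (field; lra).
  assert (HX2 : e ^ 2 * S ^ 2 <= X ^ 2) by (pose proof (Rmult_le_pos e S); nra).
  assert (Hs2 : e ^ 2 * s ^ 2 <= e ^ 2 * S ^ 2) by (apply Rmult_le_compat_l; nra).
  apply (Rle_trans _ (s * (2 * S) * (e ^ 2 * s))).
  - apply Rmult_le_compat_r; [lra | apply Rmult_le_compat_l; lra].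
  - replace (s * (2 * S) * (e ^ 2 * s)) with (2 * S * (e ^ 2 * s ^ 2)) by ring. nra.
Qed.

Lemma d_psi_s_factor q s : 0 < s ->
  exists c, 0 < c /\ d * psi_s d q s = c * (d * (q + d * S_a q s)).
Proof.
  intros Hs. pose proof (Xd_pos d q s d_bounds (or_introl Hs)) as HX.
  pose proof (S_a_pos q s Hs) as HS.
  exists (s / (S_a q s * Xd d q s ^ 2)). split.
  - apply Rdiv_lt_0_compat; [lra | apply Rmult_lt_0_compat; nra].
  - unfold psi_s. field. nra.
Qed.

Hypothesis d_neq0 : d <> 0.

(* [d * psi_s] has the sign of [d * (q + d * S_a q s)], which increases with [s]: two
   points of a level set of [psi d q] lie on either side of its only critical point. *)
Lemma psi_level_sign q a b : 0 < a < b -> psi d q a = psi d q b ->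
  d * (q + d * S_a q a) < 0 < d * (q + d * S_a q b).
Proof.
  intros Hab E.
  destruct (MVT_cor2 (psi d q) (psi_s d q) a b ltac:(lra)) as [c [Ec Hc]].
  { intros c Hc. apply is_derive_Reals, psi_derive_s. lra. }
  assert (Hc0 : psi_s d q c = 0).
  { rewrite E, Rminus_diag in Ec. symmetry in Ec. apply Rmult_integral in Ec. lra. }
  destruct (d_psi_s_factor q c ltac:(lra)) as [k [Hk Ek]].
  rewrite Hc0, Rmult_0_r in Ek.
  assert (Hzero : d * (q + d * S_a q c) = 0) by nra.
  assert (Hdd : 0 < d * d) by (apply Rsqr_pos_lt; exact d_neq0).
  pose proof (S_a_lt q a c ltac:(lra)). pose proof (S_a_lt q c b ltac:(lra)).
  split; nra.
Qed.

Lemma psi_q_lt_of_psi_eq q a b : 0 < a < b -> psi d q a = psi d q b ->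
  d * q < 0 /\ psi_q d q a < psi_q d q b.
Proof.
  intros Hab E. destruct (psi_level_sign q a b Hab E) as [Ha Hb].
  assert (Hdq : d * q < 0) by (pose proof (S_a_nonneg q a); nra).
  split; [exact Hdq |].
  destruct (d_psi_s_factor q a ltac:(lra)) as [ca [Hca Ea]].
  destruct (d_psi_s_factor q b ltac:(lra)) as [cb [Hcb Eb]].
  pose proof (psi_euler q a ltac:(lra)) as Eula.
  pose proof (psi_euler q b ltac:(lra)) as Eulb.
  assert (Hw : 0 < d * q * (psi_q d q a - psi_q d q b)).
  { replace (d * q * (psi_q d q a - psi_q d q b))
      with (b * (d * psi_s d q b) - a * (d * psi_s d q a)) by nra.
    rewrite Ea, Eb.
    assert (0 < cb * (d * (q + d * S_a q b))) by (apply Rmult_lt_0_compat; lra).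
    assert (ca * (d * (q + d * S_a q a)) < 0) by nra.
    nra. }
  nra.
Qed.

End Psi.

Definition Bk (l r k a : R) : R := k * (l - a) + r.

(* With [k = (1 - beta) / alpha], [G l r k delta Q0 A] is [G2 l r alpha beta Q0 A delta]
   by conversion. *)
Definition G (l r k d q a : R) : R :=
  d * q * ln (Xd d q a / Xd d q (Bk l r k a)) - (a - l + S_a q a - S_a q (Bk l r k a)).

Definition G_a (l r k d q a : R) : R :=
  -1 - a / Xd d q a - k * Bk l r k a / Xd d q (Bk l r k a).

Definition G_q (l r k d q a : R) : R := psi d q a - psi d q (Bk l r k a).

Definition G_qq (l r k d q a : R) : R := psi_q d q a - psi_q d q (Bk l r k a).

Lemma continuity_2d_pt_Xd d (f : R -> R -> R) x y :
  continuity_2d_pt f x y -> continuity_2d_pt (fun u v => Xd d u (f u v)) x y.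
Proof.
  intros Hf. unfold Xd, S_a. apply continuity_2d_pt_plus.
  - apply (continuity_1d_2d_pt_comp sqrt (fun u v => u ^ 2 + f u v ^ 2)).
    + apply continuity_pt_sqrt. nra.
    + apply continuity_2d_pt_plus; simpl.
      * apply continuity_2d_pt_mult; [apply continuity_2d_pt_id1 |].
        apply continuity_2d_pt_mult; [apply continuity_2d_pt_id1 | apply continuity_2d_pt_const].
      * apply continuity_2d_pt_mult; [exact Hf |].
        apply continuity_2d_pt_mult; [exact Hf | apply continuity_2d_pt_const].
  - apply continuity_2d_pt_mult; [apply continuity_2d_pt_const | apply continuity_2d_pt_id1].
Qed.

Lemma continuity_2d_pt_Bk l r k x y : continuity_2d_pt (fun _ v => Bk l r k v) x y.
Proof.
  unfold Bk. apply continuity_2d_pt_plus; [| apply continuity_2d_pt_const].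
  apply continuity_2d_pt_mult; [apply continuity_2d_pt_const |].
  apply continuity_2d_pt_minus; [apply continuity_2d_pt_const | apply continuity_2d_pt_id2].
Qed.

Section Model.

Variables l r k d : R.
Hypotheses (l_pos : 0 < l) (r_pos : 0 < r) (k_pos : 0 < k) (d_bounds : -1 < d < 1).

Lemma Bk_pos a : a < l + r / k -> 0 < Bk l r k a.
Proof.
  intros Ha. unfold Bk.
  replace (k * (l - a) + r) with (k * (l + r / k - a)) by (field; lra).
  apply Rmult_lt_0_compat; lra.
Qed.

Lemma G_alt q a : G l r k d q a =
  d * q * ln (Xd d q a / Xd d q (Bk l r k a)) - (Xd d q a - Xd d q (Bk l r k a)) - (a - l).
Proof. unfold G, Xd. ring. Qed.

Lemma G_derive_a q a : q <> 0 \/ 0 < a < l + r / k ->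
  is_derive (G l r k d q) a (G_a l r k d q a).
Proof.
  intros Hqa.
  assert (Hpos : forall s, q <> 0 \/ 0 < s -> 0 < q ^ 2 + s ^ 2 /\ 0 < S_a q s /\ 0 < Xd d q s).
  { intros s Hs. assert (Hsq : 0 < q ^ 2 + s ^ 2).
    { destruct Hs as [Hq | Hs]; [pose proof (pow2_gt_0 q Hq) | pose proof (pow2_gt_0 s ltac:(lra))]; nra. }
    split; [exact Hsq | split; [apply sqrt_lt_R0, Hsq | apply Xd_pos; tauto]]. }
  destruct (Hpos a ltac:(tauto)) as [HQa [HSa HXa]].
  destruct (Hpos (Bk l r k a)) as [HQb [HSb HXb]].
  { destruct Hqa as [Hq | Ha]; [left; exact Hq | right; apply Bk_pos; lra]. }
  unfold G, G_a, Xd, S_a, Bk in *. auto_derive.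
  - replace (q * (q * 1) + a * (a * 1)) with (q ^ 2 + a ^ 2) by ring.
    replace (q * (q * 1) + (k * (l + - a) + r) * ((k * (l + - a) + r) * 1))
      with (q ^ 2 + (k * (l - a) + r) ^ 2) by ring.
    repeat split; try nra. apply Rdiv_lt_0_compat; lra.
  - replace (q * (q * 1) + a * (a * 1)) with (q ^ 2 + a ^ 2) by ring.
    replace (q * (q * 1) + (k * (l + - a) + r) * ((k * (l + - a) + r) * 1))
      with (q ^ 2 + (k * (l - a) + r) ^ 2) by ring.
    replace (l + - a) with (l - a) by ring. field. lra.
Qed.

Lemma G_a_le_m1 q a : 0 < a < l + r / k -> G_a l r k d q a <= -1.
Proof.
  intros Ha. pose proof (Bk_pos a ltac:(lra)) as HB. unfold G_a.
  assert (0 < a / Xd d q a) by (apply Rdiv_lt_0_compat; [| apply Xd_pos]; lra).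
  assert (0 < k * Bk l r k a / Xd d q (Bk l r k a))
    by (apply Rdiv_lt_0_compat; [apply Rmult_lt_0_compat | apply Xd_pos]; lra).
  lra.
Qed.

Lemma G_steep q a1 a2 : 0 < a1 -> a1 <= a2 -> a2 < l + r / k ->
  a2 - a1 <= G l r k d q a1 - G l r k d q a2.
Proof.
  intros H1 H12 H2. apply (sub_le_of_derive_le_m1 _ (G_a l r k d q)); [exact H12 | |];
    intros x Hx; [apply G_derive_a; right | apply G_a_le_m1]; lra.
Qed.

Lemma G_root_unique q A1 A2 : 0 < A1 < l + r / k -> 0 < A2 < l + r / k ->
  G l r k d q A1 = 0 -> G l r k d q A2 = 0 -> A1 = A2.
Proof.
  intros H1 H2 E1 E2. destruct (Rle_or_lt A1 A2) as [H12 | H21].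
  - pose proof (G_steep q A1 A2 ltac:(lra) H12 ltac:(lra)). lra.
  - pose proof (G_steep q A2 A1 ltac:(lra) ltac:(lra) ltac:(lra)). lra.
Qed.

Lemma G_derive_q q a : 0 < a < l + r / k ->
  is_derive (fun q => G l r k d q a) q (G_q l r k d q a).
Proof.
  intros Ha. pose proof (Bk_pos a ltac:(lra)) as HB.
  pose proof (Xd_pos d q a d_bounds (or_introl (proj1 Ha))) as HXa.
  pose proof (Xd_pos d q _ d_bounds (or_introl HB)) as HXb.
  pose proof (S_a_pos q a (proj1 Ha)) as HSa. pose proof (S_a_pos q _ HB) as HSb.
  unfold G, G_q, psi, Xd, S_a in *. set (b := Bk l r k a) in *. auto_derive.
  - replace (q * (q * 1) + a * (a * 1)) with (q ^ 2 + a ^ 2) by ring.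
    replace (q * (q * 1) + b * (b * 1)) with (q ^ 2 + b ^ 2) by ring.
    repeat split; try nra. apply Rdiv_lt_0_compat; lra.
  - replace (q * (q * 1) + a * (a * 1)) with (q ^ 2 + a ^ 2) by ring.
    replace (q * (q * 1) + b * (b * 1)) with (q ^ 2 + b ^ 2) by ring.
    rewrite <- Rdiv_def, ln_div by lra. field. lra.
Qed.

Lemma G_q_derive_q q a : 0 < a < l + r / k ->
  is_derive (fun q => G_q l r k d q a) q (G_qq l r k d q a).
Proof.
  intros Ha. apply (is_derive_minus (fun q => psi d q a) (fun q => psi d q (Bk l r k a)));
    apply psi_derive_q; auto; [lra | apply Bk_pos; lra].
Qed.

Lemma continuity_2d_pt_G_a q a : 0 < a < l + r / k -> continuity_2d_pt (G_a l r k d) q a.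
Proof.
  intros Ha. pose proof (Bk_pos a ltac:(lra)) as HB. unfold G_a.
  repeat apply continuity_2d_pt_minus; try apply continuity_2d_pt_const.
  - apply continuity_2d_pt_mult; [apply continuity_2d_pt_id2 |].
    apply continuity_2d_pt_inv; [apply (continuity_2d_pt_Xd d (fun _ v => v)), continuity_2d_pt_id2 |].
    apply Rgt_not_eq, Xd_pos; lra.
  - apply continuity_2d_pt_mult;
      [apply continuity_2d_pt_mult; [apply continuity_2d_pt_const | apply continuity_2d_pt_Bk] |].
    apply continuity_2d_pt_inv;
      [apply (continuity_2d_pt_Xd d (fun _ v => Bk l r k v)), continuity_2d_pt_Bk |].
    apply Rgt_not_eq, Xd_pos; lra.
Qed.


Lemma G_root_exists q : exists A, 0 < A < l + r / k /\ G l r k d q A = 0.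
Proof.
  assert (Hrk : 0 < r / k) by (apply Rdiv_lt_0_compat; lra).
  destruct (Req_dec q 0) as [-> | Hq].
  - (* The logarithmic term vanishes and the equation becomes linear in [A]. *)
    set (A := (l * (1 + k) + r) / (2 + k)).
    assert (HA : 0 < A < l + r / k).
    { unfold A. split; [apply Rdiv_lt_0_compat; nra |].
      apply (Rmult_lt_reg_r ((2 + k) * k)); [nra |]. field_simplify; nra. }
    exists A. split; [exact HA |].
    pose proof (Bk_pos A ltac:(lra)) as HB.
    unfold G. rewrite !S_a_0_l by lra. unfold Bk in *. unfold A. field. lra.
  - set (AM := l + r / k).
    assert (HBM : Bk l r k AM = 0) by (unfold Bk, AM; field; lra).
    assert (HB0 : 0 < Bk l r k 0) by (apply Bk_pos; lra).
    assert (HX : forall s, 0 < Xd d q s) by (intro s; apply Xd_pos; tauto).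
    assert (HdqX : forall s, d * q < Xd d q s)
      by (intro s; unfold Xd; pose proof (abs_le_S_a_l q s); pose proof (Rabs_pos_lt q Hq); lra).
    assert (G0 : 0 < G l r k d q 0).
    { rewrite G_alt.
      assert (Hlt : Xd d q 0 < Xd d q (Bk l r k 0))
        by (unfold Xd; pose proof (S_a_lt q 0 (Bk l r k 0) ltac:(lra)); lra).
      pose proof (sub_lt_mul_ln_div _ _ (d * q) (HX 0) (HdqX 0) Hlt).
      lra. }
    assert (GM : G l r k d q AM < 0).
    { rewrite G_alt, HBM.
      assert (Hlt : Xd d q 0 < Xd d q AM)
        by (unfold Xd; pose proof (S_a_lt q 0 AM ltac:(unfold AM; lra)); lra).
      pose proof (mul_ln_div_lt_sub _ _ (d * q) (HX 0) (HdqX 0) Hlt).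
      unfold AM in *. lra. }
    destruct (Ranalysis5.IVT_interv (fun a => - G l r k d q a) 0 AM) as [A [HA EA]].
    + intros a _. apply continuity_pt_opp.
      apply (continuity_pt_of_is_derive _ _ (G_a l r k d q a)), G_derive_a. left; exact Hq.
    + unfold AM; lra.
    + lra.
    + lra.
    + exists A. split; [| lra].
      split; [destruct (Req_dec A 0) as [-> |] | destruct (Req_dec A AM) as [-> |]]; lra.
Qed.

Lemma G_at_l q : G l r k d q l = d * q * ln (Xd d q l / Xd d q r) - (Xd d q l - Xd d q r).
Proof. rewrite G_alt. unfold Bk. replace (k * (l - l) + r) with r by ring. ring. Qed.

Lemma G_at_l_sign q : (l < r -> 0 < G l r k d q l) /\ (r < l -> G l r k d q l < 0).
Proof.
  rewrite G_at_l.
  assert (HX : forall s, 0 < s -> 0 < Xd d q s) by (intros s Hs; apply Xd_pos; auto).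
  assert (HdqX : forall s, 0 < s -> d * q < Xd d q s)
    by (intros s Hs; unfold Xd; pose proof (S_a_pos q s Hs); lra).
  split; intros Hlr.
  - assert (Hlt : Xd d q l < Xd d q r) by (unfold Xd; pose proof (S_a_lt q l r ltac:(lra)); lra).
    pose proof (sub_lt_mul_ln_div _ _ (d * q) (HX l l_pos) (HdqX l l_pos) Hlt). lra.
  - assert (Hlt : Xd d q r < Xd d q l) by (unfold Xd; pose proof (S_a_lt q r l ltac:(lra)); lra).
    pose proof (mul_ln_div_lt_sub _ _ (d * q) (HX r r_pos) (HdqX r r_pos) Hlt). lra.
Qed.

Lemma abs_G_at_l_le q : q <> 0 ->
  Rabs (G l r k d q l) <= Rabs (l ^ 2 - r ^ 2) / (2 * (1 - Rabs d)) / Rabs q.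
Proof.
  intros Hq. rewrite G_at_l.
  assert (Hd1 : Rabs d < 1) by (apply Rabs_def1; lra).
  assert (Hq0 : 0 < Rabs q) by (apply Rabs_pos_lt, Hq).
  set (m := (1 - Rabs d) * Rabs q).
  assert (Hm : 0 < m) by (apply Rmult_lt_0_compat; lra).
  assert (HmX : forall s, m <= Xd d q s).
  { intro s. apply (Rle_trans _ ((1 - Rabs d) * S_a q s)); [| apply Xd_ge].
    apply Rmult_le_compat_l; [lra | apply abs_le_S_a_l]. }
  set (D := Rabs (Xd d q l - Xd d q r)).
  assert (HD : D <= Rabs (l ^ 2 - r ^ 2) / (2 * Rabs q)).
  { unfold D, Xd. replace (S_a q l + d * q - (S_a q r + d * q)) with (S_a q l - S_a q r) by ring.
    pose proof (abs_le_S_a_l q l). pose proof (abs_le_S_a_l q r).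
    assert (Hsq : (S_a q l - S_a q r) * (S_a q l + S_a q r) = l ^ 2 - r ^ 2)
      by (pose proof (S_a_sq q l); pose proof (S_a_sq q r); nra).
    rewrite <- Hsq.
    rewrite Rabs_mult, (Rabs_pos_eq (S_a q l + S_a q r)) by lra.
    apply (Rmult_le_reg_r (2 * Rabs q)); [lra |].
    replace (Rabs (S_a q l - S_a q r) * (S_a q l + S_a q r) / (2 * Rabs q) * (2 * Rabs q))
      with (Rabs (S_a q l - S_a q r) * (S_a q l + S_a q r)) by (field; lra).
    pose proof (Rabs_pos (S_a q l - S_a q r)). nra. }
  assert (Hln : Rabs (d * q * ln (Xd d q l / Xd d q r)) <= Rabs d * D / (1 - Rabs d)).
  { rewrite !Rabs_mult.
    apply (Rle_trans _ (Rabs d * Rabs q * (D / m))).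
    - apply Rmult_le_compat_l; [apply Rmult_le_pos; apply Rabs_pos | apply abs_ln_div_le; auto].
    - unfold m. right. field. lra. }
  apply (Rle_trans _ (D / (1 - Rabs d))).
  - unfold Rminus at 1. eapply Rle_trans; [apply Rabs_triang |]. rewrite Rabs_Ropp. fold D.
    replace (D / (1 - Rabs d)) with (Rabs d * D / (1 - Rabs d) + D) by (field; lra). lra.
  - replace (Rabs (l ^ 2 - r ^ 2) / (2 * (1 - Rabs d)) / Rabs q)
      with (Rabs (l ^ 2 - r ^ 2) / (2 * Rabs q) / (1 - Rabs d)) by (field; lra).
    unfold Rdiv at 1 3. apply Rmult_le_compat_r; [left; apply Rinv_0_lt_compat; lra | exact HD].
Qed.

Lemma G_q_derive_a t s : 0 < s -> 0 < Bk l r k s ->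
  is_derive (G_q l r k d t) s (psi_s d t s + k * psi_s d t (Bk l r k s)).
Proof.
  intros Hs HB. unfold G_q.
  replace (psi_s d t s + k * psi_s d t (Bk l r k s))
    with (psi_s d t s - (- k) * psi_s d t (Bk l r k s)) by ring.
  apply (is_derive_minus (psi d t) (fun s => psi d t (Bk l r k s))).
  - apply psi_derive_s; auto.
  - apply (is_derive_comp (psi d t) (Bk l r k)); [apply psi_derive_s; auto |].
    unfold Bk. auto_derive; [exact I | ring].
Qed.

Lemma G_q_lipschitz_near a0 : 0 < a0 < l + r / k -> exists del L, 0 < del /\
  forall t a, Rabs (a - a0) < del -> Rabs (G_q l r k d t a - G_q l r k d t a0) <= L * Rabs (a - a0).
Proof.
  intros Ha0. pose proof (Bk_pos a0 ltac:(lra)) as HB0.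
  set (m := Rmin a0 (Bk l r k a0) / 2).
  assert (Hm : 0 < m) by (unfold m; pose proof (Rmin_glb_lt a0 (Bk l r k a0) 0); lra).
  assert (Hma : m <= a0 / 2) by (unfold m; pose proof (Rmin_l a0 (Bk l r k a0)); lra).
  assert (HmB : m <= Bk l r k a0 / 2) by (unfold m; pose proof (Rmin_r a0 (Bk l r k a0)); lra).
  assert (Hd1 : Rabs d < 1) by (apply Rabs_def1; lra).
  assert (He : 0 < (1 - Rabs d) ^ 2) by (apply pow_lt; lra).
  set (M := 2 / ((1 - Rabs d) ^ 2 * m)).
  assert (Hbound : forall t s, m <= s -> Rabs (psi_s d t s) <= M).
  { intros t s Hs. apply (Rle_trans _ _ _ (abs_psi_s_le d d_bounds t s ltac:(lra))).
    unfold M, Rdiv. apply Rmult_le_compat_l; [lra |].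
    apply Rinv_le_contravar; [apply Rmult_lt_0_compat; lra | apply Rmult_le_compat_l; lra]. }
  exists (m / (1 + k)), ((1 + k) * M). split; [apply Rdiv_lt_0_compat; lra |].
  intros t a Ha.
  apply (bounded_variation _ (fun s => psi_s d t s + k * psi_s d t (Bk l r k s))). intros s Hs.
  assert (Hsa0 : Rabs (s - a0) < m / (1 + k)) by lra.
  assert (Hk1 : m / (1 + k) <= m)
    by (apply (Rmult_le_reg_r (1 + k)); [lra |]; field_simplify; nra).
  assert (Hkm : k * (m / (1 + k)) <= m)
    by (apply (Rmult_le_reg_r (1 + k)); [lra |]; field_simplify; nra).
  apply Rabs_def2 in Hsa0.
  assert (Hs_m : m <= s) by lra.
  assert (HBs_m : m <= Bk l r k s).
  { replace (Bk l r k s) with (Bk l r k a0 - k * (s - a0)) by (unfold Bk; ring). nra. }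
  split; [apply G_q_derive_a; lra |].
  eapply Rle_trans; [apply Rabs_triang |]. rewrite Rabs_mult, (Rabs_pos_eq k) by lra.
  pose proof (Hbound t s Hs_m). pose proof (Hbound t _ HBs_m). nra.
Qed.

(** * The root curve *)

Section Curve.

Variable Af : R -> R.
Hypothesis Af_root : forall q, 0 < Af q < l + r / k /\ G l r k d q (Af q) = 0.

Lemma Af_dist q a : 0 < a < l + r / k -> Rabs (Af q - a) <= Rabs (G l r k d q a).
Proof.
  apply (implicit_dist (G l r k d) (G_a l r k d) 0 (l + r / k)); auto.
  - intros q' a' Ha'. apply G_derive_a. right; exact Ha'.
  - exact G_a_le_m1.
Qed.

Lemma Af_derive q : is_derive Af q (- G_q l r k d q (Af q) / G_a l r k d q (Af q)).
Proof.
  apply (implicit_derive (G l r k d) (G_a l r k d) 0 (l + r / k)); auto.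
  - intros q' a' Ha'. apply G_derive_a. right; exact Ha'.
  - exact G_a_le_m1.
  - apply G_derive_q, Af_root.
  - apply continuity_2d_pt_G_a, Af_root.
Qed.

Lemma Af_lims : is_lim Af p_infty l /\ is_lim Af m_infty l.
Proof.
  apply (is_lim_infty_of_inv_bound Af l (Rabs (l ^ 2 - r ^ 2) / (2 * (1 - Rabs d)))).
  intros q Hq. eapply Rle_trans; [apply Af_dist | apply abs_G_at_l_le; exact Hq].
  assert (0 < r / k) by (apply Rdiv_lt_0_compat; lra). lra.
Qed.

Lemma Af_vs_l q : (l < r -> l < Af q) /\ (r < l -> Af q < l).
Proof.
  destruct (Af_root q) as [HA EA]. destruct (G_at_l_sign q) as [Hlt Hgt].
  assert (Hl : 0 < l < l + r / k) by (assert (0 < r / k) by (apply Rdiv_lt_0_compat; lra); lra).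
  split; intros Hlr.
  - destruct (Rlt_or_le l (Af q)) as [ok | Hle]; auto.
    pose proof (G_steep q (Af q) l ltac:(lra) Hle ltac:(lra)). specialize (Hlt Hlr). lra.
  - destruct (Rlt_or_le (Af q) l) as [ok | Hle]; auto.
    pose proof (G_steep q l (Af q) ltac:(lra) Hle ltac:(lra)). specialize (Hgt Hlr). lra.
Qed.

Lemma Af_eq_l : l = r -> forall q, Af q = l.
Proof.
  intros Hlr q.
  assert (Hl : 0 < l < l + r / k) by (assert (0 < r / k) by (apply Rdiv_lt_0_compat; lra); lra).
  pose proof (Af_dist q l Hl) as H.
  rewrite G_at_l, <- Hlr, Rdiv_diag, ln_1, Rmult_0_r, Rminus_diag, Rminus_0_r, Rabs_R0 in H
    by (apply Rgt_not_eq, Xd_pos; lra).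
  pose proof (Rabs_pos (Af q - l)). apply Rminus_diag_uniq, Rabs_eq_0. lra.
Qed.

Lemma Af_vs_Bk q : (l < r -> Af q < Bk l r k (Af q)) /\ (r < l -> Bk l r k (Af q) < Af q).
Proof.
  destruct (Af_root q) as [HA EA]. destruct (Af_vs_l q) as [Hlt Hgt].
  pose proof (Bk_pos (Af q) ltac:(lra)) as HB.
  rewrite G_alt in EA. set (a := Af q) in *. set (b := Bk l r k a) in *.
  assert (HX : forall s, 0 < s -> 0 < Xd d q s) by (intros s Hs; apply Xd_pos; auto).
  assert (HdqX : forall s, 0 < s -> d * q < Xd d q s)
    by (intros s Hs; unfold Xd; pose proof (S_a_pos q s Hs); lra).
  assert (Hne : (l < r \/ r < l) -> a <> b).
  { intros Hlr <-. rewrite Rdiv_diag, ln_1 in EA by (apply Rgt_not_eq, HX; lra).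
    destruct Hlr as [Hlr | Hlr]; [specialize (Hlt Hlr) | specialize (Hgt Hlr)]; lra. }
  split; intros Hlr.
  - destruct (Rlt_or_le a b) as [ok | Hle]; auto. exfalso. specialize (Hlt Hlr).
    assert (Hba : b < a) by (destruct (Req_dec a b) as [E |]; [destruct (Hne (or_introl Hlr) E) | lra]).
    assert (Hlt' : Xd d q b < Xd d q a) by (unfold Xd; pose proof (S_a_lt q b a ltac:(lra)); lra).
    pose proof (mul_ln_div_lt_sub _ _ (d * q) (HX b HB) (HdqX b HB) Hlt'). lra.
  - destruct (Rlt_or_le b a) as [ok | Hle]; auto. exfalso. specialize (Hgt Hlr).
    assert (Hab : a < b) by (destruct (Req_dec a b) as [E |]; [destruct (Hne (or_intror Hlr) E) | lra]).
    assert (Hlt' : Xd d q a < Xd d q b) by (unfold Xd; pose proof (S_a_lt q a b ltac:(lra)); lra).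
    pose proof (sub_lt_mul_ln_div _ _ (d * q) (HX a (proj1 HA)) (HdqX a (proj1 HA)) Hlt'). lra.
Qed.

Lemma G_q_Af_continuous t : continuity_pt (fun t => G_q l r k d t (Af t)) t.
Proof.
  destruct (Af_root t) as [Ha _].
  destruct (G_q_lipschitz_near (Af t) Ha) as [del [L [Hdel Hlip]]].
  apply (continuity_pt_comp_lipschitz (G_q l r k d) Af t del L Hdel Hlip).
  - exact (continuity_pt_of_is_derive _ _ _ (Af_derive t)).
  - exact (continuity_pt_of_is_derive _ _ _ (G_q_derive_q t (Af t) Ha)).
Qed.

(* [Af'] vanishes at a zero of [G_q], so only the explicit dependence on [Q0] counts. *)
Lemma G_q_Af_derive_at_zero z : G_q l r k d z (Af z) = 0 ->
  is_derive (fun t => G_q l r k d t (Af t)) z (G_qq l r k d z (Af z)).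
Proof.
  intros Hz. destruct (Af_root z) as [Ha _].
  destruct (G_q_lipschitz_near (Af z) Ha) as [del [L [Hdel Hlip]]].
  apply (is_derive_comp_lipschitz (G_q l r k d) Af z del L Hdel Hlip).
  - pose proof (Af_derive z) as H. rewrite Hz in H.
    replace (- 0 / G_a l r k d z (Af z)) with 0 in H by (unfold Rdiv; ring). exact H.
  - apply G_q_derive_q, Ha.
Qed.

Lemma G_q_Af_zero_sign z : d <> 0 -> l <> r -> G_q l r k d z (Af z) = 0 ->
  d * z < 0 /\ 0 < (l - r) * G_qq l r k d z (Af z).
Proof.
  intros Hd0 Hlr Hz. destruct (Af_root z) as [Ha _]. destruct (Af_vs_Bk z) as [Hlt Hgt].
  pose proof (Bk_pos (Af z) ltac:(lra)) as HB.
  unfold G_q, G_qq in *.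
  destruct (Rlt_or_le l r) as [Hl | Hr].
  - specialize (Hlt Hl).
    destruct (psi_q_lt_of_psi_eq d d_bounds Hd0 z (Af z) (Bk l r k (Af z)) ltac:(lra) ltac:(lra)).
    split; [auto | nra].
  - specialize (Hgt ltac:(lra)).
    destruct (psi_q_lt_of_psi_eq d d_bounds Hd0 z (Bk l r k (Af z)) (Af z) ltac:(lra) ltac:(lra)).
    split; [auto | nra].
Qed.

Lemma G_q_Af_has_zero : exists z, G_q l r k d z (Af z) = 0.
Proof.
  destruct (classic (exists z, G_q l r k d z (Af z) = 0)) as [ok | Hnone]; [exact ok |].
  (* Otherwise [Af'] has a constant sign, against [Af_lims]. *)
  exfalso.
  assert (Hnz : forall t, G_q l r k d t (Af t) <> 0) by (intros t Ht; apply Hnone; exists t; exact Ht).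
  destruct Af_lims as [Hp Hm].
  apply (monotone_same_lims_absurd Af (fun t => - G_q l r k d t (Af t) / G_a l r k d t (Af t)) l
    Af_derive); auto.
  assert (Hga : forall t, 0 < - G_a l r k d t (Af t))
    by (intro t; pose proof (G_a_le_m1 t (Af t) (proj1 (Af_root t))); lra).
  destruct (nonvanishing_sign _ G_q_Af_continuous Hnz) as [Hsgn | Hsgn]; [left | right]; intro t;
    specialize (Hsgn t); pose proof (Rinv_0_lt_compat _ (Hga t));
    replace (- G_q l r k d t (Af t) / G_a l r k d t (Af t))
      with (G_q l r k d t (Af t) * / - G_a l r k d t (Af t))
      by (field; pose proof (Hga t); lra); nra.
Qed.

Lemma Qstar_exists : d <> 0 -> exists Qs, Qstar_prop l r d Af Qs.
Proof.
  intros Hd0. destruct (Req_dec l r) as [Hlr | Hlr].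
  - assert (Hflat : forall Q, is_derive Af Q 0).
    { intro Q. apply (is_derive_ext (fun _ => l)); [intro t; rewrite (Af_eq_l Hlr t); reflexivity |].
      auto_derive; reflexivity. }
    (* [Af] is constant, so any point of the sign of [- d] will do. *)
    exists (- d). unfold Qstar_prop. rewrite Hlr, Rminus_diag, sgn_0.
    repeat split; intros; try lra; exists 0; rewrite sgn_0; split; auto; ring.
  - set (f := fun t => (l - r) * G_q l r k d t (Af t)).
    assert (Hfc : forall x, continuity_pt f x)
      by (intro x; apply continuity_pt_scal, G_q_Af_continuous).
    assert (Hup : forall y, f y = 0 -> upcrossing f y).
    { intros y Hy. assert (Hy0 : G_q l r k d y (Af y) = 0).
      { apply Rmult_integral in Hy. destruct Hy; [lra | assumption]. }
      apply (upcrossing_of_derive f y ((l - r) * G_qq l r k d y (Af y)) Hy).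
      - apply G_q_Af_zero_sign; auto.
      - apply is_derive_scal, G_q_Af_derive_at_zero, Hy0. }
    destruct G_q_Af_has_zero as [z Hz].
    assert (Hfz : f z = 0) by (unfold f; rewrite Hz; ring).
    destruct (sign_change_of_upcrossings f z Hfc Hup Hfz) as [Hright Hleft].
    destruct (G_q_Af_zero_sign z Hd0 Hlr Hz) as [Hdz _].
    assert (Hfactor : forall t, exists c, 0 < c /\
      - G_q l r k d t (Af t) / G_a l r k d t (Af t) * (l - r) = c * f t).
    { intro t. pose proof (G_a_le_m1 t (Af t) (proj1 (Af_root t))).
      exists (/ - G_a l r k d t (Af t)). split; [apply Rinv_0_lt_compat; lra |].
      unfold f. field. lra. }
    exists z. split; [intros; nra | split; [intros; nra | split]]; intros Q HQ;
      exists (- G_q l r k d Q (Af Q) / G_a l r k d Q (Af Q)); (split; [apply Af_derive |]);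
      destruct (Hfactor Q) as [c [Hc Ec]].
    + apply sgn_eq_of_mul_pos. rewrite Ec. pose proof (Hright Q HQ). nra.
    + apply sgn_eq_opp_of_mul_neg. rewrite Ec. pose proof (Hleft Q HQ). nra.
Qed.

End Curve.

End Model.

Lemma Qstar_prop_extremum l r d (Af : R -> R) Qs Q : (forall x, ex_derive Af x) ->
  Qstar_prop l r d Af Qs -> 0 <= (l - r) * (Af Q - Af Qs).
Proof.
  intros Hder [_ [_ [Hright Hleft]]].
  destruct (Req_dec l r) as [<- | Hlr]; [rewrite Rminus_diag; lra |].
  assert (Hscal : forall c t, is_derive (fun t => c * Af t) t (c * Derive Af t))
    by (intros c t; apply is_derive_scal, Derive_correct, Hder).
  assert (Hsgn : forall t P, (exists d', is_derive Af t d' /\ P d') -> P (Derive Af t)).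
  { intros t P [d' [Hd' HP]]. rewrite (is_derive_unique Af t d' Hd'). exact HP. }
  assert (Hlr0 : l - r <> 0) by lra.
  destruct (Rtotal_order Q Qs) as [HQ | [-> | HQ]]; [| lra |].
  - assert (- (l - r) * Af Q < - (l - r) * Af Qs); [| nra].
    apply (lt_of_derive_pos (fun t => - (l - r) * Af t) (fun t => - (l - r) * Derive Af t));
      [exact HQ | intros; apply Hscal |].
    intros x Hx. pose proof (mul_neg_of_sgn_eq_opp _ _ Hlr0 (Hsgn x _ (Hleft x ltac:(lra)))). nra.
  - assert ((l - r) * Af Qs < (l - r) * Af Q); [| nra].
    apply (lt_of_derive_pos (fun t => (l - r) * Af t) (fun t => (l - r) * Derive Af t));
      [exact HQ | intros; apply Hscal |].
    intros x Hx. pose proof (mul_pos_of_sgn_eq _ _ Hlr0 (Hsgn x _ (Hright x ltac:(lra)))). nra.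
Qed.

Lemma diffusion_ratio_bounds D1 D2 : 0 < D1 -> 0 < D2 -> D1 <> D2 ->
  -1 < (D2 - D1) / (D2 + D1) < 1 /\ (D2 - D1) / (D2 + D1) <> 0.
Proof.
  intros H1 H2 H12. split; [split; [apply Rlt_div_r | apply Rlt_div_l]; lra |].
  unfold Rdiv. apply Rmult_integral_contrapositive_currified; [lra |].
  apply Rinv_neq_0_compat. lra.
Qed.

Theorem theorem3p8 (l r alpha beta D1 D2 : R) :
  0 < l -> 0 < r -> 0 < alpha -> alpha < beta -> beta < 1 ->
  0 < D1 -> 0 < D2 -> D1 <> D2 ->
  let delta := (D2 - D1) / (D2 + D1) in
  (forall Q0 : R, exists! A : R,
      0 < A < A_M l r alpha beta /\ G2 l r alpha beta Q0 A delta = 0) /\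
  (forall Af : R -> R,
    (forall Q0 : R, 0 < Af Q0 < A_M l r alpha beta /\
                    G2 l r alpha beta Q0 (Af Q0) delta = 0) ->
    is_lim Af p_infty l /\ is_lim Af m_infty l /\
    (exists Qs : R, Qstar_prop l r delta Af Qs) /\
    (forall Qs : R, Qstar_prop l r delta Af Qs ->
      forall Q0 : R,
        (l < r -> l <= Af Q0 <= Af Qs) /\
        (l > r -> Af Qs <= Af Q0 <= l) /\
        (l = r -> Af Q0 = l /\ l = r /\ r = Af Qs))).
Proof.
  intros Hl Hr Hal Hab Hb HD1 HD2 HD12 delta.
  set (k := (1 - beta) / alpha).
  assert (Hk : 0 < k) by (apply Rdiv_lt_0_compat; lra).
  assert (HAM : A_M l r alpha beta = l + r / k) by (unfold A_M, k; field; lra).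
  destruct (diffusion_ratio_bounds D1 D2 HD1 HD2 HD12) as [Hd Hd0].
  rewrite HAM. split.
  - intros Q0. destruct (G_root_exists l r k delta Hl Hr Hk Hd Q0) as [A [HA EA]].
    exists A. split; [exact (conj HA EA) |]. intros A' [HA' EA'].
    exact (G_root_unique l r k delta Hk Hd Q0 A A' HA HA' EA EA').
  - intros Af HAf.
    assert (Hroot : forall q, 0 < Af q < l + r / k /\ G l r k delta q (Af q) = 0)
      by (intro q; exact (HAf q)).
    destruct (Af_lims l r k delta Hl Hr Hk Hd Af Hroot) as [Hp Hm].
    split; [exact Hp | split; [exact Hm | split]].
    { exact (Qstar_exists l r k delta Hl Hr Hk Hd Af Hroot Hd0). }
    intros Qs HQs Q0.
    pose proof (Qstar_prop_extremum l r delta Af Qs Q0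
      (fun x => ex_intro _ _ (Af_derive l r k delta Hk Hd Af Hroot x)) HQs) as Hext.
    destruct (Af_vs_l l r k delta Hl Hr Hk Hd Af Hroot Q0) as [Hlt Hgt].
    split; [| split]; intros Hlr.
    - split; [pose proof (Hlt Hlr) |]; nra.
    - split; [| pose proof (Hgt Hlr)]; nra.
    - rewrite !(Af_eq_l l r k delta Hl Hr Hk Hd Af Hroot Hlr). auto.
Qed.
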